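(* Fix $\beta>0$ and a transient MDP with a sink state as in the context. Let $\pi=(\bm d)_\infty\in\Pi_{\mathrm{SR}}$. Then there exists a vector $\bm f\in\mathbb R^S$ with $\bm f\ge\bm 0$, $\bm f\neq\bm 0$, $\bm f^\top\bm B^{\bm d}=\rho(\bm B^{\bm d})\,\bm f^\top$, and \[ \bm f^\top\bm b^{\bm d}>0. \]
   Context: MDP: states $\mathcal S=\{1,\dots,S\}$ plus sink state $e$ ($p(e,a,e)=1$, $r(e,a,e)=0$); finite actions; transitions $p(s,a,s')$, real rewards $r(s,a,s')$. Transience (standing assumption): for every stationary deterministic policy $\pi$, $\sum_{t\ge0}\mathbb P^{\pi,s}[\tilde s_t=s']<\infty$ for all $s,s'\in\mathcal S$. $\Pi_{\mathrm{SR}}$: stationary randomized policies $(\bm d)_\infty$, $d_a(s)$ the probability of action $a$ in $s$. $B^{\bm d}_{s,s'}=\sum_a p(s,a,s')d_a(s)e^{-\beta r(s,a,s')}$, $b^{\bm d}_s=\sum_a p(s,a,e)d_a(s)e^{-\beta r(s,a,e)}$; $\rho$ is the spectral radius. *)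

From HB Require Import structures.
From mathcomp Require Import all_boot all_order all_algebra.
From mathcomp Require Import all_classical all_reals.
From mathcomp Require Import topology ereal normedtype sequences exp.
From mathcomp Require Import complex.

Set Implicit Arguments.
Unset Strict Implicit.
Unset Printing Implicit Defensive.

Import Order.TTheory GRing.Theory Num.Theory.
Local Open Scope ring_scope.

(* States of S are ['I_S]; the full state space is [option 'I_S], where
   [None] is the sink state [e].
   The sink's dynamics (p(e,a,e)=1, r(e,a,e)=0) are built in below. *)

Section MDP.
Variable R : realType.
Variables S A : nat.
Implicit Types (p r : 'I_S -> 'I_A -> option 'I_S -> R).

Definition is_transition p : Prop :=
  (forall s a y, 0 <= p s a y) /\ (forall s a, \sum_(y : option 'I_S) p s a y = 1).

(* d is a (randomized) decision rule: d a s in the paper is [d s a] here *)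
Definition is_decision_rule (d : 'I_S -> 'I_A -> R) : Prop :=
  (forall s a, 0 <= d s a) /\ (forall s, \sum_(a : 'I_A) d s a = 1).

Definition det_trans p (pol : 'I_S -> 'I_A) (x y : option 'I_S) : R :=
  match x with
  | None => (y == None)%:R
  | Some s => p s (pol s) y
  end.

(* [state_dist p pol s t y] = P^{pol,s}[ s_t = y ] *)
Fixpoint state_dist p (pol : 'I_S -> 'I_A) (s : 'I_S) (t : nat) (y : option 'I_S) : R :=
  match t with
  | 0 => (y == Some s)%:R
  | t'.+1 => \sum_(x : option 'I_S) state_dist p pol s t' x * det_trans p pol x y
  end.

Definition transient p : Prop :=
  forall (pol : 'I_S -> 'I_A) (s s' : 'I_S),
    (\sum_(0 <= t <oo) (state_dist p pol s t (Some s'))%:E < +oo)%E.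

Definition Bmat (beta : R) p r (d : 'I_S -> 'I_A -> R) : 'M[R]_S :=
  \matrix_(s, s') \sum_(a : 'I_A)
     p s a (Some s') * d s a * expR (- (beta * r s a (Some s'))).

Definition bvec (beta : R) p r (d : 'I_S -> 'I_A -> R) : 'cV[R]_S :=
  \col_s \sum_(a : 'I_A) p s a None * d s a * expR (- (beta * r s a None)).

End MDP.

Definition spectral_radius (R : realType) (n : nat) (M : 'M[R]_n) : R :=
  sup [set complex.Re `|l| | l in
        [set l : R[i] | eigenvalue (map_mx (real_complex R) M) l]]%classic.

From HB Require Import structures.
From mathcomp Require Import all_boot all_order all_algebra.
From mathcomp Require Import all_classical all_reals.
From mathcomp Require Import topology ereal normedtype sequences exp derive.
From mathcomp Require Import complex.
From mathcomp Require Import lra.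
Import Order.TTheory GRing.Theory Num.Theory.
Import numFieldTopology.Exports numFieldNormedType.Exports.

Set Implicit Arguments.
Unset Strict Implicit.
Unset Printing Implicit Defensive.

Local Open Scope ring_scope.
Local Open Scope classical_set_scope.

(* Perron-Frobenius gives a nonnegative left eigenvector f of B^d for rho(B^d).
   For a positive matrix C, the largest t with x C >= t x for some x in the
   simplex is attained by compactness, and a maximiser is an eigenvector.  A
   nonnegative B is the limit of B + eJ (J the all-ones matrix): the
   eigenpairs of B + eJ, e in [0, 1], whose eigenvalue dominates rho(B) form a
   compact set, and the least e occurring in it is 0.
   If f^T b^d = 0, a policy that picks in each state an action of positive
   d-probability can neither reach the sink nor leave the support of f from
   it (all weights e^{-beta r} are positive, so the sign of beta is
   irrelevant).  Started in that support, the chain has mass one there at all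
   times, so its expected number of visits is infinite, against transience. *)

Lemma sum_option (V : nmodType) (T : finType) (F : option T -> V) :
  \sum_(y : option T) F y = F None + \sum_(i : T) F (Some i).
Proof.
rewrite (bigD1 None) //=; congr (_ + _).
rewrite (reindex_omap Some id) => [|[] //].
by apply: eq_bigl => i /=; rewrite eqxx.
Qed.

Lemma psumr_neq0_gt0 (R : numDomainType) (I : finType) (F : I -> R) :
  (forall i, 0 <= F i) -> \sum_i F i != 0 -> exists i, 0 < F i.
Proof.
move=> F0; rewrite psumr_eq0 // => /allPn [i _]; rewrite implyTb => Fi.
by exists i; rewrite lt_def Fi F0.
Qed.

Section RowMul.
Variables (R : numDomainType) (m n : nat).
Implicit Types (x : 'rV[R]_m) (M : 'M[R]_(m, n)).

Lemma mulmx_row_ge0 x M j :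
  (forall i, 0 <= x ord0 i) -> (forall i, 0 <= M i j) -> 0 <= (x *m M) ord0 j.
Proof. by move=> x0 M0; rewrite mxE; apply: sumr_ge0 => i _; exact: mulr_ge0. Qed.

Lemma mulmx_row_gt0 x M j : (forall i, 0 <= x ord0 i) -> (exists i, 0 < x ord0 i) ->
  (forall i, 0 < M i j) -> 0 < (x *m M) ord0 j.
Proof.
move=> x0 [i xi] M_gt0; rewrite mxE (bigD1 i) //= ltr_pwDl ?mulr_gt0 //.
by apply: sumr_ge0 => l _; rewrite mulr_ge0 // ltW.
Qed.

Lemma mulmx_row_eq0 x M i j :
  (forall i, 0 <= x ord0 i) -> (forall i, 0 <= M i j) ->
  (x *m M) ord0 j = 0 -> 0 < x ord0 i -> M i j = 0.
Proof.
move=> x0 M0; rewrite mxE => /psumr_eq0P xM0 xi.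
have /eqP := xM0 (fun l _ => mulr_ge0 (x0 l) (M0 l)) i isT.
by rewrite mulf_eq0 gt_eqF //= => /eqP.
Qed.

End RowMul.

Section SuperEigen.
Variables (R : realFieldType) (n : nat).
Implicit Types (B C : 'M[R]_n) (x : 'rV[R]_n).

Definition simplex : set 'rV[R]_n :=
  [set x | (forall j, 0 <= x ord0 j) /\ \sum_j x ord0 j = 1].

Definition supereigen B x (t : R) := forall j, t * x ord0 j <= (x *m B) ord0 j.

Lemma simplex_le1 x j : simplex x -> x ord0 j <= 1.
Proof.
move=> [x0 <-]; rewrite (bigD1 j) //= lerDl.
by apply: sumr_ge0 => i _; exact: x0.
Qed.

Lemma simplex_itv x j : simplex x -> x ord0 j \in `[0, 1]%R.
Proof. by move=> xs; rewrite in_itv /= xs.1 simplex_le1. Qed.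

Lemma simplex_gt0 x : simplex x -> exists j, 0 < x ord0 j.
Proof.
by move=> [x0 x1]; apply: psumr_neq0_gt0 x0 _; rewrite x1 oner_eq0.
Qed.

Lemma simplex_neq0 x : simplex x -> x != 0.
Proof. by move=> /simplex_gt0 [j]; apply: contraTneq => ->; rewrite mxE ltxx. Qed.

Lemma supereigen0 B x : (forall i j, 0 <= B i j) -> (forall j, 0 <= x ord0 j) ->
  supereigen B x 0.
Proof. by move=> B0 x0 j; rewrite mul0r; exact: mulmx_row_ge0 x0 (B0^~ j). Qed.

Lemma supereigen_le_sum B x t : (forall i j, 0 <= B i j) ->
  simplex x -> supereigen B x t -> t <= \sum_i \sum_j B i j.
Proof.
move=> B0 xs xt; have [x0 x1] := xs.
have -> : t = \sum_j t * x ord0 j by rewrite -mulr_sumr x1 mulr1.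
apply: le_trans (ler_sum _ (fun j _ => xt j)) _.
rewrite exchange_big /=; apply: ler_sum => j _; rewrite mxE.
apply: ler_sum => i _; rewrite -[leRHS]mul1r.
by apply: ler_wpM2r => //; exact: simplex_le1.
Qed.

Lemma supereigen_normalize B x t : (forall j, 0 <= x ord0 j) ->
  (exists j, 0 < x ord0 j) -> supereigen B x t -> exists2 y, simplex y & supereigen B y t.
Proof.
move=> x0 [j0 xj0] xt; set m := \sum_j x ord0 j.
have m_gt0 : 0 < m by rewrite /m (bigD1 j0) //= ltr_pwDl // sumr_ge0.
exists (m^-1 *: x); first split.
- by move=> j; rewrite mxE mulr_ge0 // invr_ge0 ltW.
- by under eq_bigr do rewrite mxE; rewrite -mulr_sumr mulVf // gt_eqF.
- move=> j; rewrite -scalemxAl !mxE mulrCA ler_pM2l ?invr_gt0 //.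
  by have := xt j; rewrite mxE.
Qed.

Lemma supereigen_le_mx B C x t : (forall i j, B i j <= C i j) ->
  (forall j, 0 <= x ord0 j) -> supereigen B x t -> supereigen C x t.
Proof.
move=> BC x0 xt j; apply: le_trans (xt j) _; rewrite !mxE.
by apply: ler_sum => i _; exact: ler_wpM2l.
Qed.

Lemma simplex_eigenvalueE B x lam : simplex x -> x *m B = lam *: x ->
  lam = \sum_j (x *m B) ord0 j.
Proof.
move=> [_ x1] ->; under eq_bigr do rewrite mxE.
by rewrite -mulr_sumr x1 mulr1.
Qed.

End SuperEigen.

Arguments simplex {R n}.

Section SpectralRadius.
Variables (R : realType) (n : nat).
Implicit Types (B : 'M[R]_n) (x : 'rV[R]_n).
Import Normc.
Local Open Scope complex_scope.

Lemma normc_ge0 (z : R[i]) : 0 <= normc z.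
Proof. by case: z => a b; exact: sqrtr_ge0. Qed.

Lemma normc_real (a : R) : 0 <= a -> normc a%:C = a.
Proof. by move=> a0; rewrite /= expr0n addr0 sqrtr_sqr ger0_norm. Qed.

Lemma normc_sum (I : finType) (F : I -> R[i]) :
  normc (\sum_i F i) <= \sum_i normc (F i).
Proof.
elim/big_rec2: _ => [|i a z _ IH]; first by rewrite normc0.
by apply: le_trans (le_normcD _ _) _; rewrite lerD2l.
Qed.

Lemma eigenvalue_supereigen B (l : R[i]) : (forall i j, 0 <= B i j) ->
  eigenvalue (map_mx (real_complex R) B) l ->
  exists2 x, simplex x & supereigen B x (normc l).
Proof.
move=> B0 /eigenvalueP [v vB vn0].
apply: (@supereigen_normalize _ _ _ (\row_j normc (v ord0 j))).
- by move=> j; rewrite mxE normc_ge0.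
- move: vn0; rewrite matrix_eq0 => /forallPn [i /forallPn [j]]; rewrite (ord1 i) => vj.
  exists j; rewrite mxE lt_def normc_ge0 andbT.
  by apply: contra vj => /eqP/eq0_normc ->.
- move=> j; rewrite mxE -normcM.
  have /rowP/(_ j) := vB; rewrite !mxE => <-.
  apply: le_trans (normc_sum _) _; apply: ler_sum => i _.
  by rewrite !mxE normcM normc_real.
Qed.

Lemma spectral_radius_le B (lam : R) : (forall i j, 0 <= B i j) -> 0 <= lam ->
  (forall x t, simplex x -> supereigen B x t -> t <= lam) ->
  spectral_radius B <= lam.
Proof.
move=> B0 lam0 lam_max; rewrite /spectral_radius.
have [[l l_eig]|no_eig] :=
  pselect (exists l, eigenvalue (map_mx (real_complex R) B) l).
  apply: ge_sup; first by exists (normc l), l.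
  move=> _ [l' l'_eig <-].
  by have [x xs xt] := eigenvalue_supereigen B0 l'_eig; exact: lam_max xs xt.
rewrite (_ : [set _ | _ in _] = set0) ?sup0 //.
by apply/seteqP; split => // t [l l_eig _]; apply: no_eig; exists l.
Qed.

Lemma eigenvalue_le_spectral_radius B x (t : R) : (forall i j, 0 <= B i j) ->
  0 <= t -> x != 0 -> x *m B = t *: x -> t <= spectral_radius B.
Proof.
move=> B0 t0 xn0 xB; rewrite -[t]normc_real //; apply: ub_le_sup.
  exists (\sum_i \sum_j B i j) => _ [l l_eig <-].
  have [y ys yt] := eigenvalue_supereigen B0 l_eig.
  exact: supereigen_le_sum ys yt.
exists t%:C => //; apply/eigenvalueP; exists (map_mx (real_complex R) x).
  by rewrite -map_mxM xB map_mxZ.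
by rewrite map_mx_eq0.
Qed.

End SpectralRadius.

Section ClosedSets.
Variables (R : realType) (T : topologicalType).
Implicit Types f g : T -> R.

Lemma continuous_sum (I : finType) (F : I -> T -> R) :
  (forall i, continuous (F i)) -> continuous (fun w => \sum_i F i w).
Proof. by move=> Fc; apply: continuous_big => //; exact: add_continuous. Qed.

Lemma closed_le_fun f g :
  continuous f -> continuous g -> closed [set w | f w <= g w].
Proof.
move=> fc gc; rewrite (_ : [set w | _] = (g - f) @^-1` [set x | 0 <= x]).
  apply: preimage_closed; last exact: closed_ge.
  by move=> w _; apply: continuousB; [exact: gc | exact: fc].
by apply/seteqP; split => w /=; rewrite subr_ge0.
Qed.

Lemma closed_eq_fun f g :
  continuous f -> continuous g -> closed [set w | f w = g w].
Proof.
move=> fc gc.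
rewrite (_ : [set w | _] = [set w | f w <= g w] `&` [set w | g w <= f w]).
  by apply: closedI; exact: closed_le_fun.
apply/seteqP; split => w /=; first by move=> ->.
by move=> [fg gf]; apply/eqP; rewrite eq_le fg gf.
Qed.

Lemma closed_forall (I : Type) (A : I -> set T) :
  (forall i, closed (A i)) -> closed [set w | forall i, A i w].
Proof.
move=> Ac; rewrite (_ : [set w | _] = \bigcap_(i in setT) A i).
  by apply: closed_bigI => i _; exact: Ac.
by apply/seteqP; split => w /= wA i //; exact: wA.
Qed.

Variable k : nat.
Implicit Types (u v : T -> 'rV[R]_k) (M : T -> 'M[R]_k).

Lemma continuous_mulmx_coord u M j :
  (forall i, continuous (fun w => u w ord0 i)) ->
  (forall i j, continuous (fun w => M w i j)) ->
  continuous (fun w => (u w *m M w) ord0 j).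
Proof.
move=> uc Mc; under eq_fun do rewrite mxE.
by apply: continuous_sum => i w; apply: continuousM; [exact: uc | exact: Mc].
Qed.

Lemma closed_row_eq u v :
  (forall j, continuous (fun w => u w ord0 j)) ->
  (forall j, continuous (fun w => v w ord0 j)) -> closed [set w | u w = v w].
Proof.
move=> uc vc.
rewrite (_ : [set w | _] = [set w | forall j, u w ord0 j = v w ord0 j]).
  by apply: closed_forall => j; exact: closed_eq_fun.
by apply/seteqP; split => w /= => [->//|uv]; apply/rowP => j; rewrite uv.
Qed.

End ClosedSets.

Section SimplexTopology.
Variables (R : realType) (k : nat).

Lemma continuous_fst_coord j : continuous (fun w : 'rV[R]_k * R => w.1 ord0 j).
Proof.
by move=> w; exact: (continuous_comp cvg_fst (@coord_continuous R 1 k ord0 j w.1)).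
Qed.

Lemma continuous_snd : continuous (fun w : 'rV[R]_k * R => w.2).
Proof. by move=> w; exact: cvg_snd. Qed.

Lemma closed_simplex : closed (@simplex R k).
Proof.
have -> : @simplex R k =
    [set x | forall j, 0 <= x ord0 j] `&` [set x | \sum_j x ord0 j = 1] by [].
apply: closedI.
  apply: (@closed_forall 'rV[R]_k _ (fun j => [set x | 0 <= x ord0 j])) => j.
  by apply: closed_le_fun; [exact: cst_continuous | exact: coord_continuous].
apply: closed_eq_fun; last exact: cst_continuous.
by apply: continuous_sum => j; exact: coord_continuous.
Qed.

Lemma compact_simplex : compact (@simplex R k).
Proof.
have -> : @simplex R k =
    [set x : 'rV[R]_k | forall i, x ord0 i \in `[0, 1]%R] `&` simplex.
  by apply/esym/setIidr => x xs i; exact: simplex_itv.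
apply: compact_closedI closed_simplex.
by apply: (@rV_compact _ _ (fun=> `[(0 : R), 1]%classic)) => i; exact: segment_compact.
Qed.

Lemma closed_supereigen (C : 'M[R]_k) :
  closed [set w : 'rV[R]_k * R | supereigen C w.1 w.2].
Proof.
pose A j := [set w : 'rV[R]_k * R | w.2 * w.1 ord0 j <= (w.1 *m C) ord0 j].
apply: (@closed_forall _ _ A) => j; apply: closed_le_fun => [w|].
  by apply: continuousM; [exact: continuous_snd | exact: continuous_fst_coord].
apply: continuous_mulmx_coord => [i|i l].
  exact: continuous_fst_coord.
exact: cst_continuous.
Qed.

End SimplexTopology.

Arguments continuous_fst_coord {R k}.
Arguments continuous_snd {R k}.

Section Perron.
Variables (R : realType) (n : nat).
Implicit Types (B C : 'M[R]_n.+1) (x y : 'rV[R]_n.+1).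

Lemma simplex_const : simplex (const_mx n.+1%:R^-1 : 'rV[R]_n.+1).
Proof.
split=> [j|]; first by rewrite mxE invr_ge0 ler0n.
under eq_bigr do rewrite mxE.
by rewrite sumr_const card_ord -[_ *+ _]mulr_natl mulfV // pnatr_eq0.
Qed.

Lemma supereigen_improve C x t : (forall i j, 0 < C i j) ->
  simplex x -> supereigen C x t -> x *m C != t *: x ->
  exists y t', [/\ simplex y, supereigen C y t' & t < t'].
Proof.
move=> C_gt0 xs xt xC_neq.
set y := x *m C; set z := y - t *: x.
have z0 j : 0 <= z ord0 j.
  by rewrite !mxE subr_ge0; have := xt j; rewrite mxE.
have [k zk] : exists k, 0 < z ord0 k.
  move: xC_neq; rewrite -subr_eq0 -/z matrix_eq0 => /forallPn [i /forallPn [k]].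
  by rewrite (ord1 i) => zk; exists k; rewrite lt_def zk z0.
have y_gt0 j : 0 < y ord0 j.
  exact: mulmx_row_gt0 xs.1 (simplex_gt0 xs) (C_gt0^~ j).
have zC_gt0 j : 0 < (z *m C) ord0 j.
  exact: mulmx_row_gt0 z0 (ex_intro _ k zk) (C_gt0^~ j).
pose del j := (z *m C) ord0 j / y ord0 j.
have [j0 _ del_min] := @arg_minP _ _ _ ord0 xpredT del isT.
have yt : supereigen C y (t + del j0).
  have yC : y *m C = t *: y + z *m C.
    by rewrite /z mulmxBl -scalemxAl addrC subrK.
  move=> j; have -> : (y *m C) ord0 j = t * y ord0 j + (z *m C) ord0 j.
    by rewrite yC !mxE.
  rewrite mulrDl lerD2l -[leRHS](divfK (lt0r_neq0 (y_gt0 j))).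
  by apply: ler_wpM2r; [exact: ltW | exact: del_min].
have [y' y's y't] :=
  supereigen_normalize (fun j => ltW (y_gt0 j)) (ex_intro _ k (y_gt0 k)) yt.
by exists y', (t + del j0); split; rewrite // ltrDl divr_gt0.
Qed.

Lemma perron_positive C : (forall i j, 0 < C i j) ->
  exists x lam, [/\ simplex x, x *m C = lam *: x &
    forall y t, simplex y -> supereigen C y t -> t <= lam].
Proof.
move=> C_gt0; have C0 i j := ltW (C_gt0 i j).
set tmax := \sum_i \sum_j C i j.
pose K := (simplex `*` `[0, tmax]) `&` [set w | supereigen C w.1 w.2].
have K_compact : compact K.
  apply: compact_closedI; last exact: closed_supereigen.
  by apply: compact_setX; [exact: compact_simplex | exact: segment_compact].
have us := simplex_const; have u0 := supereigen0 C0 us.1.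
have K0 : K !=set0.
  exists (const_mx n.+1%:R^-1, 0); split=> //; split=> //=.
  by rewrite in_itv /= lexx (supereigen_le_sum C0 us u0).
have [[x lam] /set_mem [[xs /= /andP [lam0 _]] xlam] lam_max] :=
  compact_EVT_max K0 K_compact (continuous_subspaceT continuous_snd).
have {}lam_max y t : simplex y -> supereigen C y t -> t <= lam.
  move=> ys yt; have [t0|t_gt0] := leP t 0; first exact: le_trans t0 lam0.
  apply: (lam_max (y, t)); apply/mem_set; split=> //; split=> //=.
  by rewrite in_itv /= (ltW t_gt0) (supereigen_le_sum C0 ys yt).
exists x, lam; split=> //; have [//|xC_neq] := eqVneq (x *m C) (lam *: x).
have [y [t [ys yt lam_t]]] := supereigen_improve C_gt0 xs xlam xC_neq.
by have := lam_max y t ys yt; rewrite leNgt lam_t.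
Qed.

Lemma perron_perturbed B e : (forall i j, 0 <= B i j) -> 0 < e ->
  exists x lam,
    [/\ simplex x, x *m (B + const_mx e) = lam *: x & spectral_radius B <= lam].
Proof.
move=> B0 e_gt0; set C := B + const_mx e.
have BC i j : B i j <= C i j by rewrite !mxE lerDl ltW.
have C_gt0 i j : 0 < C i j by rewrite !mxE ltr_pwDr.
have [x [lam [xs xC lam_max]]] := perron_positive C_gt0.
exists x, lam; split=> //; apply: spectral_radius_le => // [|y t ys yt].
  by apply: lam_max xs (supereigen0 (fun i j => ltW (C_gt0 i j)) xs.1).
exact: lam_max ys (supereigen_le_mx BC ys.1 yt).
Qed.

Theorem perron_frobenius B : (forall i j, 0 <= B i j) ->
  exists2 x, simplex x & x *m B = spectral_radius B *: x.
Proof.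
move=> B0; set rho := spectral_radius B.
pose M (e : R) := B + const_mx e.
pose s (w : 'rV[R]_n.+1 * R) := \sum_j (w.1 *m M w.2) ord0 j.
pose G : set ('rV[R]_n.+1 * R) := simplex `*` `[0, 1]
  `&` [set w | w.1 *m M w.2 = s w *: w.1] `&` [set w | rho <= s w].
have M_cont i j : continuous (fun w : 'rV[R]_n.+1 * R => M w.2 i j).
  move=> w; under eq_fun do rewrite !mxE.
  by apply: continuousD; [exact: cst_continuous | exact: continuous_snd].
have Mw_cont j :
    continuous (fun w : 'rV[R]_n.+1 * R => (w.1 *m M w.2) ord0 j).
  exact: continuous_mulmx_coord continuous_fst_coord M_cont.
have s_cont : continuous s by exact: continuous_sum.
have G_compact : compact G.
  apply: compact_closedI; last first.
    by apply: (@closed_le_fun _ _ (fun=> rho)); [exact: cst_continuous | exact: s_cont].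
  apply: compact_closedI.
    by apply: compact_setX; [exact: compact_simplex | exact: segment_compact].
  apply: closed_row_eq => // j w; under eq_fun do rewrite mxE.
  by apply: continuousM; [exact: s_cont | exact: continuous_fst_coord].
have G_at e : 0 < e -> e <= 1 -> exists x, G (x, e).
  move=> e_gt0 e1; have [x [lam [xs xM rho_lam]]] := perron_perturbed B0 e_gt0.
  exists x; rewrite /G /s /= -(simplex_eigenvalueE xs xM); split=> //.
  by split=> //=; rewrite in_itv /= ltW.
have G0 : G !=set0 by have [x Gx] := G_at 1 ltr01 (lexx _); exists (x, 1).
have [[x e] /set_mem [[[xs e01] xM] rho_s] e_min] :=
  compact_EVT_min G0 G_compact (continuous_subspaceT continuous_snd).
move: e01; rewrite /= in_itv /= => /andP [e0 e1].
have e_eq0 : e = 0.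
  apply/eqP; rewrite eq_le e0 andbT leNgt; apply/negP => e_gt0.
  have [y Gy] : exists y, G (y, e / 2) by apply: G_at; lra.
  by have /= := e_min (y, e / 2) (mem_set Gy); lra.
subst e; have xB : x *m B = s (x, 0) *: x by rewrite -xM /M addr0.
exists x => //; rewrite xB; congr (_ *: _); apply/eqP; rewrite eq_le rho_s andbT.
apply: (eigenvalue_le_spectral_radius B0 _ (simplex_neq0 xs) xB).
by apply: sumr_ge0 => j _; rewrite /M addr0; exact: mulmx_row_ge0 xs.1 (B0^~ j).
Qed.

End Perron.

Lemma partial_sum_le_nneseries (R : realType) (u : nat -> R) N :
  (forall t, 0 <= u t) -> (\sum_(0 <= t <oo) (u t)%:E < +oo)%E ->
  \sum_(t < N) u t <= fine (\sum_(0 <= t <oo) (u t)%:E).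
Proof.
move=> u0 u_fin; have u0E t : (0 <= (u t)%:E)%E by rewrite lee_fin.
rewrite -lee_fin fineK; last by rewrite ge0_fin_numE // nneseries_ge0.
rewrite -sumEFin -(big_mkord xpredT (fun t => (u t)%:E)).
exact: nneseries_lim_ge.
Qed.

Section PolicyClosed.
Variables (R : realType) (S A : nat) (p : 'I_S -> 'I_A -> option 'I_S -> R).
Variable pol : 'I_S -> 'I_A.
Hypothesis hp : is_transition p.

Definition policy_closed (P : pred 'I_S) :=
  forall s, P s -> \sum_(s' | P s') p s (pol s) (Some s') = 1.

Lemma state_dist_ge0 s t y : 0 <= state_dist p pol s t y.
Proof.
elim: t y => [|t IH] y /=; first exact: ler0n.
apply: sumr_ge0 => -[x|] _; apply: mulr_ge0 (IH _) _; [exact: hp.1 | exact: ler0n].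
Qed.

Lemma state_distS s t s' : state_dist p pol s t.+1 (Some s') =
  \sum_i state_dist p pol s t (Some i) * p i (pol i) (Some s').
Proof. by rewrite /= sum_option /= mulr0 add0r. Qed.

Lemma policy_closed_mass P s t : policy_closed P -> P s ->
  1 <= \sum_(s' | P s') state_dist p pol s t (Some s').
Proof.
move=> P_closed Ps; elim: t => [|t IH].
  rewrite (bigD1 s) //= eqxx lerDl; apply: sumr_ge0 => s' _; exact: ler0n.
under eq_bigr do rewrite state_distS.
rewrite exchange_big /= (bigID P) /=; apply: le_trans IH _.
rewrite -[leLHS]addr0 lerD //.
  by apply/ler_sum => i Pi; rewrite -mulr_sumr P_closed // mulr1.
apply: sumr_ge0 => i _; apply: sumr_ge0 => s' _.
by apply: mulr_ge0; [exact: state_dist_ge0 | exact: hp.1].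
Qed.

Lemma transient_not_policy_closed P s : transient p -> policy_closed P -> ~ P s.
Proof.
move=> htr P_closed Ps.
pose L s' := fine (\sum_(0 <= t <oo) (state_dist p pol s t (Some s'))%:E)%E.
have bound N : N%:R <= \sum_(s' | P s') L s'.
  apply: (@le_trans _ _ (\sum_(t < N) \sum_(s' | P s') state_dist p pol s t (Some s'))).
    rewrite -[N in N%:R]card_ord -sumr_const; apply: ler_sum => t _.
    exact: policy_closed_mass.
  rewrite exchange_big; apply: ler_sum => s' _.
  apply: partial_sum_le_nneseries (htr pol s s') => t; exact: state_dist_ge0.
have := archi_boundP (le_trans (ler0n _ 0) (bound 0)).
by rewrite ltNge bound.
Qed.

End PolicyClosed.

Section PolicyMatrices.
Variables (R : realType) (S A : nat) (beta : R).
Variables (p r : 'I_S -> 'I_A -> option 'I_S -> R) (d : 'I_S -> 'I_A -> R).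
Hypotheses (hp : is_transition p) (hd : is_decision_rule d).

Lemma decision_rule_support : exists pol : 'I_S -> 'I_A, forall s, 0 < d s (pol s).
Proof.
have supp s : exists a, 0 < d s a.
  by apply: psumr_neq0_gt0 (hd.1 s) _; rewrite hd.2 oner_eq0.
by exists (fun s => xchoose (supp s)) => s; exact: (xchooseP (supp s)).
Qed.

Let weight s y := \sum_a p s a y * d s a * expR (- (beta * r s a y)).

Let weight_term_ge0 s y a : 0 <= p s a y * d s a * expR (- (beta * r s a y)).
Proof. by rewrite !mulr_ge0 ?expR_ge0 ?hp.1 ?hd.1. Qed.

Let weight_ge0 s y : 0 <= weight s y.
Proof. exact: sumr_ge0. Qed.

Let weight_eq0 s y a : weight s y = 0 -> 0 < d s a -> p s a y = 0.
Proof.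
move=> w0 da.
move/eqP: (psumr_eq0P (fun a _ => weight_term_ge0 s y a) w0 (i := a) isT).
by rewrite !mulf_eq0 (gt_eqF da) (gt_eqF (expR_gt0 _)) !orbF => /eqP.
Qed.

Lemma Bmat_ge0 s s' : 0 <= Bmat beta p r d s s'.
Proof. by rewrite mxE; exact: weight_ge0. Qed.

Lemma bvec_ge0 s j : 0 <= bvec beta p r d s j.
Proof. by rewrite mxE; exact: weight_ge0. Qed.

Lemma Bmat_eq0 s s' a :
  Bmat beta p r d s s' = 0 -> 0 < d s a -> p s a (Some s') = 0.
Proof. by rewrite mxE; exact: weight_eq0. Qed.

Lemma bvec_eq0 s j a : bvec beta p r d s j = 0 -> 0 < d s a -> p s a None = 0.
Proof. by rewrite mxE; exact: weight_eq0. Qed.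

Lemma eigen_support_policy_closed (x : 'rV[R]_S) (lam : R) pol :
  (forall s, 0 < d s (pol s)) -> (forall s, 0 <= x ord0 s) ->
  x *m Bmat beta p r d = lam *: x -> (x *m bvec beta p r d) ord0 ord0 = 0 ->
  policy_closed p pol (fun s => 0 < x ord0 s).
Proof.
move=> pol_supp x0 xB xb s xs.
have no_exit : p s (pol s) None = 0.
  exact: bvec_eq0 (mulmx_row_eq0 x0 (fun i => bvec_ge0 i 0) xb xs) (pol_supp s).
have no_leak s' : ~~ (0 < x ord0 s') -> p s (pol s) (Some s') = 0.
  move=> xs'; have xs'0 : x ord0 s' = 0 by apply/eqP; rewrite eq_le x0 andbT leNgt.
  have xBs' : (x *m Bmat beta p r d) ord0 s' = 0 by rewrite xB mxE xs'0 mulr0.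
  exact: Bmat_eq0 (mulmx_row_eq0 x0 (fun i => Bmat_ge0 i s') xBs' xs) (pol_supp s).
have leak0 : \sum_(s' | ~~ (0 < x ord0 s')) p s (pol s) (Some s') = 0.
  by apply: big1 => s' /no_leak.
have := hp.2 s (pol s); rewrite sum_option no_exit add0r.
by rewrite (bigID (fun s' => 0 < x ord0 s')) /= leak0 addr0.
Qed.

End PolicyMatrices.

Theorem lemma9 (R : realType) (S A : nat) (hS : (0 < S)%N) (beta : R)
    (hbeta : 0 < beta)
    (p r : 'I_S -> 'I_A -> option 'I_S -> R)
    (hp : is_transition p) (htr : transient p)
    (d : 'I_S -> 'I_A -> R) (hd : is_decision_rule d) :
  exists f : 'cV[R]_S,
    [/\ forall i, 0 <= f i 0,
        f != 0,
        (f^T *m Bmat beta p r d = spectral_radius (Bmat beta p r d) *: f^T)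
      & 0 < (f^T *m bvec beta p r d) 0 0].
Proof.
case: S hS p r hp htr d hd => [//|n] _ p r hp htr d hd.
have [x xs xB] := perron_frobenius (Bmat_ge0 beta r hp hd).
exists x^T; rewrite trmxK; split=> //.
- by move=> i; rewrite mxE; exact: xs.1.
- by rewrite -trmx0 (inj_eq trmx_inj) simplex_neq0.
have xb_ge0 := mulmx_row_ge0 xs.1 (fun i => bvec_ge0 beta r hp hd i ord0).
rewrite lt_def xb_ge0 andbT.
apply/eqP => xb0; have [pol pol_supp] := decision_rule_support hd.
have [s xs_gt0] := simplex_gt0 xs.
have supp_closed := eigen_support_policy_closed hp hd pol_supp xs.1 xB xb0.
exact: (transient_not_policy_closed hp htr supp_closed xs_gt0).
Qed.
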